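(* Let $\Gamma=(V,E,\mathbf I)$ be a connected locally finite graph with $E\ne\emptyset$ and let $G\le\mathrm{Aut}\,\Gamma$ be such that $\Gamma$ is $G$-vertex-rotary, of valency $k$ and edge-multiplicity $\lambda$. Let $\alpha,\beta$ be adjacent vertices, $e$ an edge incident with both, $H=G_\alpha$, $J=G_e$. Then (a) $\Gamma\cong\mathrm{Cos}(G,H,J)$, and $G=\langle a,z\rangle$ where $H=\langle a\rangle\cong\mathbb Z_{k\lambda}$, $H\cap H^z=\langle a^k\rangle\cong\mathbb Z_\lambda$, $J=\langle z\rangle\cong\mathbb Z_2$ and $H\cap J=1$; (b) $z\notin\langle a\rangle$, $z^a\notin\langle a\rangle$, $(a,z)$ is a rotary pair for $G$, and $G$ acts regularly on the set of arcs of $\Gamma$.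
   Context: Graphs are triples $(V,E,\mathbf I)$, each edge incident with exactly two distinct vertices, multiple edges allowed. $\Gamma$ is $G$-vertex-rotary if $G$ is arc-transitive on $\Gamma$ and the stabiliser $G_\alpha$ of a vertex $\alpha$ induces a transitive cyclic group on the set $E(\alpha)$ of edges incident with $\alpha$. A rotary pair for a group $G$ is an ordered pair $(a,z)$ of elements with $G=\langle a,z\rangle$, $|a|$ finite, $|z|=2$ and $z\notin\langle a\rangle$. $\mathrm{Cos}(G,H,J)$: vertices $\{Hx\}$, edges $\{Jy\}$, $Hx$ incident with $Jy$ iff $yx^{-1}\in JH$. *)

(* Groups may be infinite, so we use an
   abstract group (carrier type with operations and axioms) acting faithfully
   on a (multi)graph; this is exactly a subgroup G <= Aut Gamma. *)
From Stdlib Require Import List Relations.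
Import ListNotations.

Record group := Group {
  gcar :> Type;
  gmul : gcar -> gcar -> gcar;
  gone : gcar;
  ginv : gcar -> gcar;
  gmulA : forall x y z, gmul x (gmul y z) = gmul (gmul x y) z;
  gmul1l : forall x, gmul gone x = x;
  gmul1r : forall x, gmul x gone = x;
  gmulVl : forall x, gmul (ginv x) x = gone;
  gmulVr : forall x, gmul x (ginv x) = gone
}.
Arguments gmul {g}. Arguments gone {g}. Arguments ginv {g}.

Fixpoint gpow {G : group} (x : G) (n : nat) : G :=
  match n with O => gone | S m => gmul (gpow x m) x end.

(* x has order n (n finite, positive): <x> is cyclic of order n, i.e. <x> ~ Z_n *)
Definition has_order {G : group} (x : G) (n : nat) : Prop :=
  0 < n /\ gpow x n = gone /\ forall m, 0 < m < n -> gpow x m <> gone.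

Definition subgroup {G : group} (K : G -> Prop) : Prop :=
  K gone /\ (forall x y, K x -> K y -> K (gmul x y)) /\ (forall x, K x -> K (ginv x)).

Definition gen {G : group} (S : G -> Prop) : G -> Prop :=
  fun x => forall K, subgroup K -> (forall y, S y -> K y) -> K x.

Definition cyc {G : group} (a : G) : G -> Prop := gen (fun y => y = a).
Definition gen2 {G : group} (a z : G) : G -> Prop := gen (fun y => y = a \/ y = z).

Definition set_eq {T : Type} (A B : T -> Prop) : Prop := forall x, A x <-> B x.
Definition setI {T : Type} (A B : T -> Prop) : T -> Prop := fun x => A x /\ B x.

Definition conjg {G : group} (x g : G) : G := gmul (ginv g) (gmul x g).
Definition conjS {G : group} (H : G -> Prop) (g : G) : G -> Prop :=
  fun y => exists h, H h /\ y = conjg h g.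

Definition rotary_pair (G : group) (a z : G) : Prop :=
  (forall g : G, gen2 a z g) /\ (exists n, has_order a n) /\ has_order z 2 /\ ~ cyc a z.

Record graph := Graph {
  Vx : Type;
  Ed : Type;
  inc : Vx -> Ed -> Prop;
  inc_two : forall e, exists u v, u <> v /\ inc u e /\ inc v e /\
                       forall w, inc w e -> w = u \/ w = v
}.
Arguments inc {g}.

Definition adj {Gm : graph} (u v : Vx Gm) : Prop :=
  u <> v /\ exists e, inc u e /\ inc v e.

Definition connected (Gm : graph) : Prop :=
  forall u v : Vx Gm, clos_refl_trans _ adj u v.

Definition locally_finite (Gm : graph) : Prop :=
  forall v : Vx Gm, exists l : list (Ed Gm), forall e, inc v e -> In e l.

Definition has_card {T : Type} (P : T -> Prop) (n : nat) : Prop :=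
  exists l : list T, NoDup l /\ length l = n /\ forall x, P x <-> In x l.

Definition valency (Gm : graph) (k : nat) : Prop :=
  forall v : Vx Gm, has_card (fun u => adj v u) k.
Definition edge_multiplicity (Gm : graph) (lam : nat) : Prop :=
  forall u v : Vx Gm, adj u v -> has_card (fun e => inc u e /\ inc v e) lam.

Record aut_action (Gm : graph) (G : group) := AutAction {
  actV : Vx Gm -> G -> Vx Gm;
  actE : Ed Gm -> G -> Ed Gm;
  actV1 : forall v, actV v gone = v;
  actVM : forall v g h, actV v (gmul g h) = actV (actV v g) h;
  actE1 : forall e, actE e gone = e;
  actEM : forall e g h, actE e (gmul g h) = actE (actE e g) h;
  act_inc : forall v e g, inc v e <-> inc (actV v g) (actE e g);
  act_faithful : forall g, (forall v, actV v g = v) -> (forall e, actE e g = e) -> g = gone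
}.
Arguments actV {Gm G}. Arguments actE {Gm G}.

Section Act.
Context {Gm : graph} {G : group} (A : aut_action Gm G).

Definition vstab (v : Vx Gm) : G -> Prop := fun g => actV A v g = v.
Definition estab (e : Ed Gm) : G -> Prop := fun g => actE A e g = e.

(* arcs are incident vertex-edge pairs (v, e) *)
Definition arc_transitive : Prop :=
  forall v e v' e', inc v e -> inc v' e' ->
    exists g : G, actV A v g = v' /\ actE A e g = e'.

Definition arc_regular : Prop :=
  forall v e v' e', inc v e -> inc v' e' ->
    exists g : G, (actV A v g = v' /\ actE A e g = e') /\
      forall g' : G, actV A v g' = v' /\ actE A e g' = e' -> g' = g.

(* G_v induces on E(v) a transitive cyclic permutation group *)
Definition vertex_rotary : Prop :=
  arc_transitive /\
  forall v : Vx Gm,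
    (forall e e', inc v e -> inc v e' -> exists h, vstab v h /\ actE A e h = e') /\
    (exists c, vstab v c /\ forall h, vstab v h ->
        exists d, cyc c d /\ forall e, inc v e -> actE A e h = actE A e d).
End Act.

Definition rcoset {G : group} (H : G -> Prop) (x : G) : G -> Prop :=
  fun g => exists h, H h /\ g = gmul h x.

Definition cos_inc {G : group} (H J : G -> Prop) (S T : G -> Prop) : Prop :=
  exists x y, S = rcoset H x /\ T = rcoset J y /\
    exists j h, J j /\ H h /\ gmul y (ginv x) = gmul j h.

Definition iso_Cos (Gm : graph) (G : group) (H J : G -> Prop) : Prop :=
  exists (fV : Vx Gm -> (G -> Prop)) (fE : Ed Gm -> (G -> Prop)),
    (forall u v, fV u = fV v -> u = v) /\
    (forall v, exists x, fV v = rcoset H x) /\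
    (forall x, exists v, fV v = rcoset H x) /\
    (forall e e', fE e = fE e' -> e = e') /\
    (forall e, exists y, fE e = rcoset J y) /\
    (forall y, exists e, fE e = rcoset J y) /\
    (forall v e, inc v e <-> cos_inc H J (fV v) (fE e)).

(* A group element fixing an arc (α, e) fixes every edge at α, because the local action
   of G_α on E(α) is cyclic, hence abelian, and transitive; it then fixes the other end of
   each of these edges, and by connectivity it fixes the whole graph, so it is trivial.
   Thus G is regular on arcs and G_α = ⟨a⟩ is regular on E(α), so |a| = kλ.  An element z
   reversing (α, e) spans G_e = {1, z}, and G = ⟨a, z⟩ because each neighbour of α is
   β^h with h ∈ G_α, so each step of a path is "z, then a rotation".  The neighbours of α
   form the ⟨a⟩-orbit of β = α^z, whose length is the least d with a^d ∈ G_β; hence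
   k = d and G_α ∩ G_α^z = G_α ∩ G_β = ⟨a^k⟩, which is regular on the λ edges joining α
   and β.  Finally v = α^g ↦ G_α g and f = e^g ↦ G_e g is the isomorphism with
   Cos(G, G_α, G_e). *)

From Stdlib Require Import List Relations Arith Lia Classical FunctionalExtensionality PropExtensionality.

Arguments gmulA {g}. Arguments gmul1l {g}. Arguments gmul1r {g}.
Arguments gmulVl {g}. Arguments gmulVr {g}.

Lemma least_nat (P : nat -> Prop) : (exists n, P n) -> exists m, P m /\ forall j, P j -> m <= j.
Proof.
  intro Hex.
  destruct (dec_inh_nat_subset_has_unique_least_element P (fun n => classic (P n)) Hex)
    as [m [[Pm Hmin] _]].
  eauto.
Qed.

Section GroupFacts.
Context {G : group}.
Implicit Types x y w : G.

Lemma gmul_cancel_l x y w : gmul x y = gmul x w -> y = w.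
Proof. intro E. rewrite <- (gmul1l y), <- (gmul1l w), <- (gmulVl x), <- !gmulA, E. reflexivity. Qed.

Lemma gmul_cancel_r x y w : gmul y x = gmul w x -> y = w.
Proof. intro E. rewrite <- (gmul1r y), <- (gmul1r w), <- (gmulVr x), !gmulA, E. reflexivity. Qed.

Lemma ginv_unique x y : gmul x y = gone -> ginv x = y.
Proof. intro E. apply (gmul_cancel_l x). rewrite gmulVr, E. reflexivity. Qed.

Lemma gmul_invK x y : gmul (gmul x (ginv y)) y = x.
Proof. rewrite <- gmulA, gmulVl, gmul1r. reflexivity. Qed.

Lemma gmul_inv_eq1 x y : gmul x (ginv y) = gone -> x = y.
Proof. intro E. apply (gmul_cancel_r (ginv y)). rewrite E, gmulVr. reflexivity. Qed.

Lemma gpow_add x m n : gpow x (m + n) = gmul (gpow x m) (gpow x n).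
Proof.
  induction n as [|n IHn]; simpl.
  - rewrite Nat.add_0_r, gmul1r. reflexivity.
  - rewrite Nat.add_succ_r. simpl. rewrite IHn, gmulA. reflexivity.
Qed.

Lemma gpow_one n : gpow (@gone G) n = gone.
Proof. induction n as [|n IHn]; simpl; [reflexivity|]. rewrite IHn, gmul1l. reflexivity. Qed.

Lemma gpow_mul x m n : gpow x (m * n) = gpow (gpow x m) n.
Proof.
  induction n as [|n IHn]; simpl.
  - rewrite Nat.mul_0_r. reflexivity.
  - rewrite Nat.mul_succ_r, gpow_add, IHn. reflexivity.
Qed.

Lemma gpow_mod x N n : gpow x N = gone -> gpow x n = gpow x (n mod N).
Proof.
  intro HN. rewrite (Nat.div_mod_eq n N) at 1.
  rewrite gpow_add, gpow_mul, HN, gpow_one, gmul1l. reflexivity.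
Qed.

Lemma has_order_of_pow_one x m : 0 < m -> gpow x m = gone -> exists N, has_order x N.
Proof.
  intros Hm Hxm.
  destruct (least_nat (fun n => 0 < n /\ gpow x n = gone)) as [N [[HN HxN] Hmin]]; [eauto|].
  exists N. split; [exact HN|split; [exact HxN|]].
  intros j Hj Hxj. specialize (Hmin j (conj (proj1 Hj) Hxj)). lia.
Qed.

Lemma has_order_pow x d q : 0 < d -> has_order x (d * q) -> has_order (gpow x d) q.
Proof.
  intros Hd [Hpos [Hx Hmin]]. split; [nia|split].
  - rewrite <- gpow_mul. exact Hx.
  - intros m Hm E. rewrite <- gpow_mul in E. apply (Hmin (d * m)); [nia|exact E].
Qed.

Lemma gen_subgroup (S : G -> Prop) : subgroup (gen S).
Proof.
  unfold gen. repeat split.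
  - intros K [H1 _] _. exact H1.
  - intros x y Hx Hy K HK HS. pose proof HK as [_ [HM _]]. apply HM; [apply Hx|apply Hy]; auto.
  - intros x Hx K HK HS. pose proof HK as [_ [_ HI]]. apply HI. apply Hx; auto.
Qed.

Lemma gen_incl (S : G -> Prop) y : S y -> gen S y.
Proof. intros Hy K _ HS. auto. Qed.

Lemma gen_min (S K : G -> Prop) :
  subgroup K -> (forall y, S y -> K y) -> forall x, gen S x -> K x.
Proof. intros HK HS x Hx. apply Hx; auto. Qed.

Lemma subgroup_ext (K K' : G -> Prop) : set_eq K K' -> subgroup K -> subgroup K'.
Proof. intros E [H1 [HM HI]]. repeat split; intros; apply E; firstorder. Qed.

Lemma subgroup_setI (K1 K2 : G -> Prop) : subgroup K1 -> subgroup K2 -> subgroup (setI K1 K2).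
Proof. unfold setI. firstorder. Qed.

Lemma subgroup_pow (K : G -> Prop) x n : subgroup K -> K x -> K (gpow x n).
Proof. intros [H1 [HM _]] Hx. induction n; simpl; auto. Qed.

Lemma rcoset_eq_mem (K P : G -> Prop) x : subgroup K -> P = rcoset K x -> P x.
Proof. intros [H1 _] ->. exists gone. split; [exact H1|symmetry; apply gmul1l]. Qed.

Lemma cyc_pow x n : cyc x (gpow x n).
Proof. apply subgroup_pow; [apply gen_subgroup|apply gen_incl; reflexivity]. Qed.

Lemma subgroup_centralizer u : subgroup (fun y => gmul u y = gmul y u).
Proof.
  repeat split.
  - rewrite gmul1l, gmul1r. reflexivity.
  - intros p q Hp Hq. rewrite gmulA, Hp, <- gmulA, Hq, gmulA. reflexivity.
  - intros p Hp. apply (gmul_cancel_l p).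
    rewrite gmulA, <- Hp, <- gmulA, gmulVr, gmul1r, gmulA, gmulVr, gmul1l. reflexivity.
Qed.

Lemma cyc_comm x u w : cyc x u -> cyc x w -> gmul u w = gmul w u.
Proof.
  intros Hu Hw.
  assert (Hux : gmul x u = gmul u x)
    by (refine (gen_min _ _ (subgroup_centralizer x) _ u Hu); intros y ->; reflexivity).
  refine (gen_min _ _ (subgroup_centralizer u) _ w Hw). intros y ->. symmetry. exact Hux.
Qed.

Lemma cyc_char x N y : has_order x N -> cyc x y -> exists i, i < N /\ y = gpow x i.
Proof.
  intros [HN [HxN _]]. apply (gen_min _ (fun y => exists i, i < N /\ y = gpow x i)).
  - repeat split.
    + exists 0. split; [lia|reflexivity].
    + intros p q [i [Hi ->]] [j [Hj ->]]. exists ((i + j) mod N).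
      split; [apply Nat.mod_upper_bound; lia|].
      rewrite <- gpow_add. apply gpow_mod; auto.
    + intros p [i [Hi ->]]. exists ((N - i) mod N). split; [apply Nat.mod_upper_bound; lia|].
      rewrite <- gpow_mod by auto. apply ginv_unique. rewrite <- gpow_add.
      replace (i + (N - i)) with N by lia. exact HxN.
  - intros y0 ->. exists (1 mod N). split; [apply Nat.mod_upper_bound; lia|].
    rewrite <- gpow_mod by auto. simpl. rewrite gmul1l. reflexivity.
Qed.

End GroupFacts.

Section Counting.
Context {T : Type}.
Implicit Types f : nat -> T.

Lemma NoDup_map_seq f s n :
  (forall i j, s <= i -> i < j -> j < s + n -> f i <> f j) -> NoDup (map f (seq s n)).
Proof.
  revert s. induction n as [|n IHn]; intros s Hinj; simpl; constructor.
  - rewrite in_map_iff. intros [x [Hx Hin]]. rewrite in_seq in Hin.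
    apply (Hinj s x); lia || auto.
  - apply IHn. intros i j Hi Hij Hj. apply Hinj; lia.
Qed.

Lemma pigeonhole f (l : list T) n :
  length l < n -> (forall i, i < n -> In (f i) l) -> exists i j, i < j < n /\ f i = f j.
Proof.
  intros Hlen Hin. apply NNPP. intro Hno.
  assert (ND : NoDup (map f (seq 0 n))).
  { apply NoDup_map_seq. intros i j _ Hij Hj E. apply Hno. exists i, j. split; [lia|auto]. }
  apply NoDup_incl_length with (l' := l) in ND.
  - rewrite length_map, length_seq in ND. lia.
  - intros x Hx. apply in_map_iff in Hx as [i [<- Hi]]. rewrite in_seq in Hi. apply Hin. lia.
Qed.

Lemma has_card_image_seq (P : T -> Prop) n f m :
  has_card P n -> (forall i j, i < j -> j < m -> f i <> f j) ->
  (forall x, P x <-> exists i, i < m /\ x = f i) -> n = m.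
Proof.
  intros [l [ND [Hl HP]]] Hinj Hch.
  assert (ND2 : NoDup (map f (seq 0 m))) by (apply NoDup_map_seq; intros; apply Hinj; lia).
  assert (I1 : incl l (map f (seq 0 m))).
  { intros x Hx. apply HP, Hch in Hx as [i [Hi ->]]. apply in_map, in_seq. lia. }
  assert (I2 : incl (map f (seq 0 m)) l).
  { intros x Hx. apply in_map_iff in Hx as [i [<- Hi]]. rewrite in_seq in Hi.
    apply HP, Hch. exists i. split; [lia|auto]. }
  apply NoDup_incl_length in I1; auto. apply NoDup_incl_length in I2; auto.
  rewrite length_map, length_seq in *. lia.
Qed.

End Counting.

Lemma inc_other_end {Gm : graph} (u v w : Vx Gm) f :
  inc u f -> inc v f -> u <> v -> inc w f -> w <> u -> w = v.
Proof.
  intros Hu Hv Huv Hw Hwu. destruct (inc_two Gm f) as [p [q [Hpq [_ [_ Hall]]]]].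
  destruct (Hall u Hu), (Hall v Hv), (Hall w Hw); subst; tauto.
Qed.

Section Actions.
Context {Gm : graph} {G : group} (A : aut_action Gm G).

Lemma actVK v g : actV A (actV A v g) (ginv g) = v.
Proof. rewrite <- actVM, gmulVr, actV1. reflexivity. Qed.

Lemma actVKV v g : actV A (actV A v (ginv g)) g = v.
Proof. rewrite <- actVM, gmulVl, actV1. reflexivity. Qed.

Lemma actEK f g : actE A (actE A f g) (ginv g) = f.
Proof. rewrite <- actEM, gmulVr, actE1. reflexivity. Qed.

Lemma actV_inj u v g : actV A u g = actV A v g -> u = v.
Proof. intro E. rewrite <- (actVK u g), E, actVK. reflexivity. Qed.

Lemma inc_act v f g : inc v f -> inc (actV A v g) (actE A f g).
Proof. apply act_inc. Qed.

Lemma adj_act u v g : adj u v -> adj (actV A u g) (actV A v g).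
Proof.
  intros [Hne [f [Hu Hv]]]. split.
  - intro E. apply Hne. eapply actV_inj; eauto.
  - exists (actE A f g). split; apply inc_act; auto.
Qed.

Lemma vstab_subgroup v : subgroup (vstab A v).
Proof.
  unfold vstab. repeat split.
  - apply actV1.
  - intros x y Hx Hy. rewrite actVM, Hx, Hy. reflexivity.
  - intros x Hx. rewrite <- Hx at 1. apply actVK.
Qed.

Lemma estab_subgroup f : subgroup (estab A f).
Proof.
  unfold estab. repeat split.
  - apply actE1.
  - intros x y Hx Hy. rewrite actEM, Hx, Hy. reflexivity.
  - intros x Hx. rewrite <- Hx at 1. apply actEK.
Qed.

Lemma vstab_rcoset v0 v x :
  actV A v0 x = v -> (fun g => actV A v0 g = v) = rcoset (vstab A v0) x.
Proof.
  intro Ex. apply functional_extensionality. intro g. apply propositional_extensionality. split.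
  - intro Eg. exists (gmul g (ginv x)). split; [|symmetry; apply gmul_invK].
    unfold vstab. rewrite actVM, Eg, <- Ex. apply actVK.
  - intros [h [Hh ->]]. rewrite actVM, Hh. exact Ex.
Qed.

Lemma estab_rcoset f0 f y :
  actE A f0 y = f -> (fun g => actE A f0 g = f) = rcoset (estab A f0) y.
Proof.
  intro Ey. apply functional_extensionality. intro g. apply propositional_extensionality. split.
  - intro Eg. exists (gmul g (ginv y)). split; [|symmetry; apply gmul_invK].
    unfold estab. rewrite actEM, Eg, <- Ey. apply actEK.
  - intros [h [Hh ->]]. rewrite actEM, Hh. exact Ey.
Qed.

Lemma conjS_vstab v g y : conjS (vstab A v) g y <-> vstab A (actV A v g) y.
Proof.
  unfold vstab. split.
  - intros [h [Hh ->]]. unfold conjg. rewrite !actVM, actVK, Hh. reflexivity.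
  - intro Ey. exists (gmul g (gmul y (ginv g))). split.
    + rewrite !actVM, Ey, actVK. reflexivity.
    + unfold conjg. rewrite !gmulA, gmulVl, gmul1l, <- !gmulA, gmulVl, gmul1r. reflexivity.
Qed.

Lemma actV_pow_fix x g q : vstab A x g -> vstab A x (gpow g q).
Proof.
  unfold vstab. intro Hg. induction q as [|q IHq]; simpl; [apply actV1|].
  rewrite actVM, IHq, Hg. reflexivity.
Qed.

Lemma actV_pow_mod x g d n :
  vstab A x (gpow g d) -> actV A x (gpow g n) = actV A x (gpow g (n mod d)).
Proof.
  intro Hd. rewrite (Nat.div_mod_eq n d) at 1.
  rewrite gpow_add, gpow_mul, actVM, (actV_pow_fix x (gpow g d) (n / d) Hd). reflexivity.
Qed.

Lemma orbit_period x g m : 0 < m -> vstab A x (gpow g m) ->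
  exists d, 0 < d /\ forall i, vstab A x (gpow g i) <-> i mod d = 0.
Proof.
  intros Hm Hxm.
  destruct (least_nat (fun n => 0 < n /\ vstab A x (gpow g n))) as [d [[Hd Hxd] Hmin]]; [eauto|].
  exists d. split; [exact Hd|]. intro i. unfold vstab. rewrite (actV_pow_mod x g d i Hxd). split.
  - intro E. apply NNPP. intro Hne.
    specialize (Hmin (i mod d) (conj (proj1 (Nat.neq_0_lt_0 _) Hne) E)).
    pose proof (Nat.mod_upper_bound i d). lia.
  - intros ->. apply actV1.
Qed.

Lemma orbit_period_inj x g d i j :
  (forall i, vstab A x (gpow g i) <-> i mod d = 0) -> i < j -> j < d ->
  actV A x (gpow g i) <> actV A x (gpow g j).
Proof.
  intros Hper Hij Hj E.
  assert (Hfix : vstab A x (gpow g (j - i))).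
  { apply (actV_inj _ _ (gpow g i)). rewrite <- actVM, <- gpow_add.
    replace (j - i + i) with j by lia. symmetry. exact E. }
  apply Hper in Hfix. rewrite Nat.mod_small in Hfix; lia.
Qed.

Lemma inc_stab_other_end u v w f g :
  vstab A u g -> inc u f -> inc v f -> u <> v -> inc w (actE A f g) -> w <> u ->
  w = actV A v g.
Proof.
  unfold vstab. intros Hg Hu Hv Huv Hw Hwu.
  assert (Hw' : inc (actV A w (ginv g)) f) by (rewrite <- (actEK f g); apply inc_act; exact Hw).
  assert (E : actV A w (ginv g) = v).
  { apply (inc_other_end u v _ f Hu Hv Huv Hw'). intro E. apply Hwu.
    rewrite <- Hg, <- E. symmetry. apply actVKV. }
  rewrite <- E. symmetry. apply actVKV.
Qed.

Definition arc_semiregular : Prop :=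
  forall v f g, inc v f -> vstab A v g -> estab A f g -> g = gone.

Lemma arc_stab_trivial v f : arc_semiregular -> inc v f ->
  set_eq (setI (vstab A v) (estab A f)) (fun g => g = gone).
Proof.
  intros Hsr Hf g. split.
  - intros [Hv Hg]. exact (Hsr v f g Hf Hv Hg).
  - intros ->. split; [apply actV1|apply actE1].
Qed.

Lemma rotary_fix_star v f g : vertex_rotary A ->
  inc v f -> vstab A v g -> estab A f g -> forall f', inc v f' -> estab A f' g.
Proof.
  intros [_ Hloc] Hf Hv Hfg f' Hf'. destruct (Hloc v) as [Htr [c [Hc Hcy]]].
  destruct (Htr f f' Hf Hf') as [h [Hh Hff']].
  destruct (Hcy g Hv) as [d [Hd Hgd]]. destruct (Hcy h Hh) as [d' [Hd' Hhd']].
  unfold estab. rewrite (Hgd f' Hf'), <- Hff', (Hhd' f Hf).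
  (* the local action is cyclic, hence abelian, so g commutes past h *)
  rewrite <- !actEM, (cyc_comm c d' d Hd' Hd), actEM, <- (Hgd f Hf), Hfg. reflexivity.
Qed.

Lemma arc_semiregular_of_rotary : vertex_rotary A -> connected Gm -> arc_semiregular.
Proof.
  intros Hrot Hconn v f g Hf Hv Hfg.
  pose (P := fun u => vstab A u g /\ forall f', inc u f' -> estab A f' g).
  assert (Pv : P v) by (split; [exact Hv|exact (rotary_fix_star v f g Hrot Hf Hv Hfg)]).
  assert (Hstep : forall x y, clos_refl_trans _ adj x y -> P x -> P y).
  { intros x y Hxy. induction Hxy as [x y Hadj| x | x y w _ IH1 _ IH2]; auto.
    intros [Px Qx]. destruct Hadj as [Hne [f0 [Hx0 Hy0]]].
    assert (Py : vstab A y g).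
    { unfold vstab. symmetry.
      apply (inc_stab_other_end x y y f0 g Px Hx0 Hy0 Hne); [rewrite (Qx f0 Hx0); exact Hy0|].
      intro E. apply Hne. symmetry. exact E. }
    exact (conj Py (rotary_fix_star y f0 g Hrot Hy0 Py (Qx f0 Hx0))). }
  apply (act_faithful _ _ A).
  - intro u. apply (Hstep v u (Hconn v u) Pv).
  - intro e. destruct (inc_two Gm e) as [p [q [_ [Hp _]]]].
    apply (Hstep v p (Hconn v p) Pv). exact Hp.
Qed.

Lemma arc_regular_of_semiregular : arc_transitive A -> arc_semiregular -> arc_regular A.
Proof.
  intros Hat Hsr v f v' f' Hvf Hvf'. destruct (Hat v f v' f' Hvf Hvf') as [g [Eg1 Eg2]].
  exists g. split; [split; auto|]. intros g' [E1 E2]. apply gmul_inv_eq1.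
  apply (Hsr v f); [exact Hvf| |].
  - unfold vstab. rewrite actVM, E1, <- Eg1. apply actVK.
  - unfold estab. rewrite actEM, E2, <- Eg2. apply actEK.
Qed.

Lemma vstab_finite_order v f h : locally_finite Gm -> arc_semiregular ->
  inc v f -> vstab A v h -> exists m, 0 < m /\ gpow h m = gone.
Proof.
  intros Hlf Hsr Hf Hh. destruct (Hlf v) as [L HL].
  assert (Hin : forall i, inc v (actE A f (gpow h i))).
  { intro i. rewrite <- (actV_pow_fix v h i Hh) at 1. apply inc_act. exact Hf. }
  destruct (pigeonhole (fun i => actE A f (gpow h i)) L (S (length L))) as [i [j [Hij E]]];
    [lia|intros i _; apply HL, Hin|].
  exists (j - i). split; [lia|].
  apply (Hsr v (actE A f (gpow h i))); [apply Hin|apply actV_pow_fix, Hh|].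
  unfold estab. rewrite <- actEM, <- gpow_add. replace (i + (j - i)) with j by lia.
  symmetry. exact E.
Qed.

Lemma vertex_orbit alpha e : arc_transitive A -> connected Gm -> inc alpha e ->
  forall v, exists g, actV A alpha g = v.
Proof.
  intros Hat Hconn Hae v.
  assert (Hstep : forall x y, clos_refl_trans _ adj x y ->
            (exists g, actV A alpha g = x) -> exists g, actV A alpha g = y).
  { intros x y Hxy. induction Hxy as [x y [_ [f [_ Hy]]]| x | x y w _ IH1 _ IH2]; auto.
    intros _. destruct (Hat alpha e y f Hae Hy) as [g [Eg _]]. eauto. }
  apply (Hstep alpha v (Hconn alpha v)). exists gone. apply actV1.
Qed.

Lemma edge_orbit alpha e : arc_transitive A -> inc alpha e -> forall f, exists g, actE A e g = f.
Proof.
  intros Hat Hae f. destruct (inc_two Gm f) as [p [_ [_ [Hp _]]]].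
  destruct (Hat alpha e p f Hae Hp) as [g [_ Eg]]. eauto.
Qed.

Lemma iso_Cos_of_arc_transitive alpha e : arc_transitive A -> connected Gm -> inc alpha e ->
  iso_Cos Gm G (vstab A alpha) (estab A e).
Proof.
  intros Hat Hconn Hae.
  pose proof (vertex_orbit alpha e Hat Hconn Hae) as Hv.
  pose proof (edge_orbit alpha e Hat Hae) as He.
  exists (fun v g => actV A alpha g = v), (fun f g => actE A e g = f).
  split; [|split; [|split; [|split; [|split; [|split]]]]].
  - intros u v E. destruct (Hv u) as [x <-]. change ((fun g => actV A alpha g = v) x).
    rewrite <- E. reflexivity.
  - intro v. destruct (Hv v) as [x Ex]. exists x. apply vstab_rcoset, Ex.
  - intro x. exists (actV A alpha x). apply vstab_rcoset. reflexivity.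
  - intros f f' E. destruct (He f) as [y <-]. change ((fun g => actE A e g = f') y).
    rewrite <- E. reflexivity.
  - intro f. destruct (He f) as [y Ey]. exists y. apply estab_rcoset, Ey.
  - intro y. exists (actE A e y). apply estab_rcoset. reflexivity.
  - intros v f. split.
    + intro Hvf. destruct (Hv v) as [x Ex]. destruct (He f) as [y Ey].
      exists x, y. split; [apply vstab_rcoset, Ex|split; [apply estab_rcoset, Ey|]].
      assert (Hi : inc alpha (actE A e (gmul y (ginv x)))).
      { rewrite <- (actVK alpha x), Ex, actEM, Ey. apply inc_act. exact Hvf. }
      destruct (Hat alpha e alpha _ Hae Hi) as [h [Hh Eh]].
      exists (gmul (gmul y (ginv x)) (ginv h)), h. split; [|split; [exact Hh|]].
      * unfold estab. rewrite actEM, <- Eh. apply actEK.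
      * symmetry. apply gmul_invK.
    + intros [x [y [Ex [Ey [j [h [Hj [Hh E]]]]]]]].
      apply rcoset_eq_mem in Ex; [|apply vstab_subgroup].
      apply rcoset_eq_mem in Ey; [|apply estab_subgroup].
      rewrite <- Ex, <- Ey, <- (gmul_invK y x), actEM, E, actEM, Hj.
      apply inc_act. rewrite <- Hh. apply inc_act. exact Hae.
Qed.

End Actions.

Section RotaryArc.
Context {Gm : graph} {G : group} (A : aut_action Gm G).
Variables (alpha beta : Vx Gm) (e : Ed Gm) (z c : G).
Hypothesis Hat : arc_transitive A.
Hypothesis Hsr : arc_semiregular A.
Hypotheses (Hae : inc alpha e) (Hbe : inc beta e) (Hneq : alpha <> beta).
Hypotheses (Hz1 : actV A alpha z = beta) (Hz2 : estab A e z).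
Hypothesis Hc : vstab A alpha c.
Hypothesis Hcy : forall h, vstab A alpha h ->
  exists d, cyc c d /\ forall f, inc alpha f -> actE A f h = actE A f d.

Lemma vstab_nbr u : adj alpha u -> exists h, vstab A alpha h /\ actV A beta h = u.
Proof.
  intros [Hne [f [Ha Hu]]]. destruct (Hat alpha e alpha f Hae Ha) as [h [Hh Ef]].
  exists h. split; [exact Hh|]. symmetry.
  apply (inc_stab_other_end A alpha beta u e h Hh Hae Hbe Hneq); [rewrite Ef; exact Hu|].
  intro E. apply Hne. symmetry. exact E.
Qed.

Lemma vstab_cyc h : vstab A alpha h <-> cyc c h.
Proof.
  split.
  - intro Hh. destruct (Hcy h Hh) as [d [Hd Hhd]].
    assert (Hd' : vstab A alpha d)
      by (refine (gen_min _ _ (vstab_subgroup A alpha) _ d Hd); intros y ->; exact Hc).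
    replace h with d; [exact Hd|]. symmetry. apply gmul_inv_eq1, (Hsr alpha e); [exact Hae| |].
    + apply (vstab_subgroup A alpha); [exact Hh|apply (vstab_subgroup A alpha), Hd'].
    + unfold estab. rewrite actEM, (Hhd e Hae). apply actEK.
  - apply (gen_min _ _ (vstab_subgroup A alpha)). intros y ->. exact Hc.
Qed.

Lemma estab_swap g : estab A e g <-> g = gone \/ g = z.
Proof.
  split.
  - intro Hg. assert (Hi : inc (actV A alpha g) e) by (rewrite <- Hg; apply inc_act; exact Hae).
    destruct (classic (actV A alpha g = alpha)) as [E|E].
    + left. apply (Hsr alpha e g Hae E Hg).
    + right. apply gmul_inv_eq1, (Hsr alpha e _ Hae).
      * unfold vstab. rewrite actVM, (inc_other_end alpha beta _ e Hae Hbe Hneq Hi E), <- Hz1.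
        apply actVK.
      * unfold estab. rewrite actEM, Hg. rewrite <- Hz2 at 1. apply actEK.
  - intros [->| ->]; [apply actE1|exact Hz2].
Qed.

Lemma estab_cyc_swap : set_eq (estab A e) (cyc z).
Proof.
  intro g. split.
  - intro Hg. destruct (proj1 (estab_swap g) Hg) as [->| ->];
      [apply (gen_subgroup _)|apply gen_incl; reflexivity].
  - apply (gen_min _ _ (estab_subgroup A e)). intros y ->. exact Hz2.
Qed.

Lemma swap_not_vstab : ~ vstab A alpha z.
Proof. intro Hz. apply Hneq. rewrite <- Hz1. symmetry. exact Hz. Qed.

Lemma swap_order : has_order z 2.
Proof.
  assert (Hzne : z <> gone) by (intro E; apply swap_not_vstab; rewrite E; apply actV1).
  assert (Hzz : gmul z z = gone).
  { destruct (proj1 (estab_swap (gmul z z)) (proj1 (proj2 (estab_subgroup A e)) z z Hz2 Hz2)) as [E|E]; auto.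
    exfalso. apply Hzne. apply (gmul_cancel_l z). rewrite E, gmul1r. reflexivity. }
  split; [lia|split].
  - simpl. rewrite gmul1l. exact Hzz.
  - intros m Hm. replace m with 1 by lia. simpl. rewrite gmul1l. exact Hzne.
Qed.

Lemma swap_not_cyc : ~ cyc c z.
Proof. intro Hz. apply swap_not_vstab, vstab_cyc, Hz. Qed.

Lemma conj_swap_not_vstab h : vstab A alpha h -> ~ vstab A alpha (conjg z h).
Proof.
  intros Hh Hzh.
  assert (Hh' : actV A alpha (ginv h) = alpha) by exact (proj2 (proj2 (vstab_subgroup A alpha)) h Hh).
  unfold vstab, conjg in Hzh. rewrite !actVM, Hh', Hz1 in Hzh.
  apply Hneq, (actV_inj A _ _ h). rewrite Hzh. exact Hh.
Qed.

Lemma gen2_all : connected Gm -> forall g, gen2 c z g.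
Proof.
  intros Hconn.
  pose proof (gen_subgroup (fun y => y = c \/ y = z)) as [Hg1 [HgM HgI]].
  assert (HgH : forall h, vstab A alpha h -> gen2 c z h).
  { intros h Hh. refine (gen_min _ _ (gen_subgroup _) _ h (proj1 (vstab_cyc h) Hh)).
    intros y ->. apply gen_incl. left. reflexivity. }
  assert (Hgz : gen2 c z z) by (apply gen_incl; right; reflexivity).
  (* along a path from alpha, each step is z followed by a rotation about alpha *)
  assert (Hreach : forall x y, clos_refl_trans _ adj x y ->
            (exists g, gen2 c z g /\ actV A alpha g = x) -> exists g, gen2 c z g /\ actV A alpha g = y).
  { intros x y Hxy. induction Hxy as [x y Hadj| x | x y w _ IH1 _ IH2]; auto.
    intros [g [Hg Ex]].
    assert (Had : adj alpha (actV A y (ginv g)))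
      by (rewrite <- (actVK A alpha g), Ex; apply adj_act, Hadj).
    destruct (vstab_nbr _ Had) as [h [Hh Eh]].
    exists (gmul (gmul z h) g). split.
    - apply HgM; [apply HgM; [exact Hgz|apply HgH, Hh]|exact Hg].
    - rewrite !actVM, Hz1, Eh. apply actVKV. }
  intro g. destruct (Hreach alpha (actV A alpha g) (Hconn _ _)) as [g0 [Hg0 E0]];
    [exists gone; split; [exact Hg1|apply actV1]|].
  rewrite <- (gmul_invK g g0). apply HgM; [apply HgH|exact Hg0].
  unfold vstab. rewrite actVM, <- E0. apply actVK.
Qed.

Variables (N d : nat).
Hypothesis HordN : has_order c N.
Hypothesis Hd : 0 < d.
Hypothesis Hper : forall i, vstab A beta (gpow c i) <-> i mod d = 0.

Lemma period_dvd_order : d * (N / d) = N.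
Proof.
  assert (HN : N mod d = 0).
  { apply Hper. destruct HordN as [_ [HcN _]]. unfold vstab. rewrite HcN. apply actV1. }
  pose proof (Nat.div_mod_eq N d). lia.
Qed.

Lemma valency_eq_period k : valency Gm k -> k = d.
Proof.
  intro Hval.
  apply (has_card_image_seq _ k (fun i => actV A beta (gpow c i)) d (Hval alpha)).
  - intros i j Hij Hj. exact (orbit_period_inj A beta c d i j Hper Hij Hj).
  - intro u. split.
    + intro Hu. destruct (vstab_nbr u Hu) as [h [Hh <-]].
      destruct (cyc_char c N h HordN (proj1 (vstab_cyc h) Hh)) as [i [_ ->]].
      exists (i mod d). split; [apply Nat.mod_upper_bound; lia|].
      apply actV_pow_mod, Hper, Nat.Div0.mod_same.
    + intros [i [_ ->]]. rewrite <- (actV_pow_fix A alpha c i Hc) at 1.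
      apply adj_act. split; [exact Hneq|exists e; auto].
Qed.

Lemma multiplicity_eq_order_div_period lam : edge_multiplicity Gm lam -> lam = N / d.
Proof.
  intro Hmult. pose proof period_dvd_order as HNd.
  assert (Hfix : forall j, vstab A alpha (gpow c (d * j)) /\ vstab A beta (gpow c (d * j))).
  { intro j. split; [apply actV_pow_fix, Hc|].
    apply Hper. rewrite Nat.mul_comm. apply Nat.Div0.mod_mul. }
  apply (has_card_image_seq _ lam (fun j => actE A e (gpow c (d * j))) (N / d)
           (Hmult alpha beta (conj Hneq (ex_intro _ e (conj Hae Hbe))))).
  - intros i j Hij Hj E. destruct HordN as [_ [_ Hmin]]. apply (Hmin (d * (j - i))); [nia|].
    apply (Hsr alpha (actE A e (gpow c (d * i)))).
    + rewrite <- (proj1 (Hfix i)) at 1. apply inc_act, Hae.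
    + apply actV_pow_fix, Hc.
    + unfold estab. rewrite <- actEM, <- gpow_add, E. do 2 f_equal. nia.
  - intro f. split.
    + intros [Ha Hb]. destruct (Hat alpha e alpha f Hae Ha) as [h [Hh <-]].
      destruct (cyc_char c N h HordN (proj1 (vstab_cyc h) Hh)) as [i [Hi ->]].
      assert (Hbi : vstab A beta (gpow c i)).
      { unfold vstab. symmetry. apply (inc_stab_other_end A alpha beta beta e _ Hh Hae Hbe Hneq Hb).
        intro E. apply Hneq. symmetry. exact E. }
      apply Hper in Hbi. exists (i / d). split; [apply Nat.Div0.div_lt_upper_bound; lia|].
      do 2 f_equal. pose proof (Nat.div_mod_eq i d). lia.
    + intros [j [_ ->]]. split.
      * rewrite <- (proj1 (Hfix j)) at 1. apply inc_act, Hae.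
      * rewrite <- (proj2 (Hfix j)) at 1. apply inc_act, Hbe.
Qed.

Lemma vstab_cap_conj_swap :
  set_eq (setI (vstab A alpha) (conjS (vstab A alpha) z)) (cyc (gpow c d)).
Proof.
  assert (Hcap : set_eq (setI (vstab A alpha) (vstab A beta))
                        (setI (vstab A alpha) (conjS (vstab A alpha) z)))
    by (intro y; unfold setI; rewrite conjS_vstab, Hz1; reflexivity).
  intro y. split.
  - intros [Hy Hy2]. apply conjS_vstab in Hy2. rewrite Hz1 in Hy2.
    destruct (cyc_char c N y HordN (proj1 (vstab_cyc y) Hy)) as [i [_ ->]].
    apply Hper in Hy2. rewrite (Nat.div_mod_eq i d), Hy2, Nat.add_0_r, gpow_mul. apply cyc_pow.
  - apply (gen_min _ _ (subgroup_ext _ _ Hcap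
             (subgroup_setI _ _ (vstab_subgroup A alpha) (vstab_subgroup A beta)))).
    intros y0 ->. apply Hcap. split; [apply actV_pow_fix, Hc|apply Hper, Nat.Div0.mod_same].
Qed.

End RotaryArc.

Theorem lemma3p1 (Gm : graph) (G : group) (A : aut_action Gm G)
  (k lam : nat)
  (Hconn : connected Gm) (Hlf : locally_finite Gm)
  (HE : exists e : Ed Gm, True)
  (Hrot : vertex_rotary A)
  (Hval : valency Gm k) (Hmult : edge_multiplicity Gm lam)
  (alpha beta : Vx Gm) (e : Ed Gm)
  (Hab : adj alpha beta) (Hae : inc alpha e) (Hbe : inc beta e) :
  let H := vstab A alpha in
  let J := estab A e in
  exists a z : G,
    (* (a) *)
    (iso_Cos Gm G H J /\
     (forall g : G, gen2 a z g) /\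
     set_eq H (cyc a) /\ has_order a (k * lam) /\
     set_eq (setI H (conjS H z)) (cyc (gpow a k)) /\ has_order (gpow a k) lam /\
     set_eq J (cyc z) /\ has_order z 2 /\
     set_eq (setI H J) (fun g => g = gone)) /\
    (* (b) *)
    (~ cyc a z /\ ~ cyc a (conjg z a) /\ rotary_pair G a z /\ arc_regular A).
Proof.
  intros H J.
  pose proof (arc_semiregular_of_rotary A Hrot Hconn) as Hsr.
  destruct Hrot as [Hat Hloc]. destruct Hab as [Hneq _].
  destruct (Hat alpha e beta e Hae Hbe) as [z [Hz1 Hz2]].
  destruct (Hloc alpha) as [_ [c [Hc Hcy]]].
  destruct (vstab_finite_order A alpha e c Hlf Hsr Hae Hc) as [m [Hm Hcm]].
  destruct (has_order_of_pow_one c m Hm Hcm) as [N HordN].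
  assert (HcN : vstab A beta (gpow c N)) by (unfold vstab; rewrite (proj1 (proj2 HordN)); apply actV1).
  destruct (orbit_period A beta c N (proj1 HordN) HcN) as [d [Hd Hper]].
  rewrite (valency_eq_period A alpha beta e c Hat Hsr Hae Hbe Hneq Hc Hcy N d HordN Hd Hper k Hval),
    (multiplicity_eq_order_div_period A alpha beta e c Hat Hsr Hae Hbe Hneq Hc Hcy N d HordN Hd Hper lam Hmult).
  pose proof (period_dvd_order A beta c N d HordN Hd Hper) as HNd. rewrite HNd.
  pose proof (vstab_cyc A alpha e c Hsr Hae Hc Hcy) as HH.
  pose proof (gen2_all A alpha beta e z c Hat Hsr Hae Hbe Hneq Hz1 Hc Hcy Hconn) as Hgen.
  pose proof (swap_order A alpha beta e z Hsr Hae Hbe Hneq Hz1 Hz2) as Hz.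
  pose proof (swap_not_cyc A alpha beta e z c Hsr Hae Hneq Hz1 Hc Hcy) as Hzc.
  assert (Hcd : has_order (gpow c d) (N / d))
    by (apply has_order_pow; [exact Hd|rewrite HNd; exact HordN]).
  exists c, z. split.
  - refine (conj (iso_Cos_of_arc_transitive A alpha e Hat Hconn Hae)
      (conj Hgen (conj HH (conj HordN (conj _ (conj Hcd (conj _ (conj Hz _)))))))).
    + exact (vstab_cap_conj_swap A alpha beta e z c Hsr Hae Hz1 Hc Hcy N d HordN Hper).
    + exact (estab_cyc_swap A alpha beta e z Hsr Hae Hbe Hneq Hz1 Hz2).
    + exact (arc_stab_trivial A alpha e Hsr Hae).
  - refine (conj Hzc (conj _ (conj (conj Hgen (conj (ex_intro _ N HordN) (conj Hz Hzc)))
                                   (arc_regular_of_semiregular A Hat Hsr)))).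
    intro Hcz. apply (conj_swap_not_vstab A alpha beta z Hneq Hz1 c Hc), HH, Hcz.
Qed.
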